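(* For all integers $m,n\geq 1$, \[p^{ed}_{od}(m,2n)-p^{ed}_{od}(m,2n-1)=-D_o(m,2n-1).\]
   Context: $\mathcal{P}^{ed}_{od}$ is the set of integer partitions such that: - all parts are distinct; - every odd part is smaller than every even part; - at least one odd part appears. $p^{ed}_{od}(m,n)$ is the number of partitions of $n$ in $\mathcal{P}^{ed}_{od}$ with exactly $m$ parts. $D_o(m,n)$ is the number of partitions of $n$ into exactly $m$ distinct odd parts. *)

From mathcomp Require Import all_boot all_order all_algebra.
Set Implicit Arguments. Unset Strict Implicit. Unset Printing Implicit Defensive.

(* A partition of n into distinct parts is encoded as its set of parts,
   a subset S of {0,...,n} (as 'I_n.+1) with 0 \notin S and
   \sum_(i in S) i = n.  The number of parts is #|S|. *)

Definition distinct_partition (n : nat) (S : {set 'I_n.+1}) : bool :=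
  (ord0 \notin S) && (\sum_(i in S) (i : nat) == n).

Definition in_Ped_od (n : nat) (S : {set 'I_n.+1}) : bool :=
  distinct_partition S &&
  [forall i in S, forall j in S, odd i ==> ~~ odd j ==> (i < j)%N] &&
  [exists i in S, odd i].

Definition p_ed_od (m n : nat) : nat :=
  #|[set S : {set 'I_n.+1} | in_Ped_od S & #|S| == m]|.

Definition D_o (m n : nat) : nat :=
  #|[set S : {set 'I_n.+1} | [&& distinct_partition S,
                                 [forall i in S, odd i] & #|S| == m]]|.

From mathcomp Require Import all_boot all_order all_algebra.
From mathcomp Require Import zify.
Set Implicit Arguments. Unset Strict Implicit. Unset Printing Implicit Defensive.

(* Let N be odd.  The identity p(m, N+1) - p(m, N) = -D_o(m, N), where p
   counts the partitions of P^{ed}_{od} with m parts, follows from two facts.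
   1. Bijection.  If S is in P^{ed}_{od} and sums to the even number N+1, it
      has at least two odd parts, so its largest odd part o is at least 3;
      replacing o by o-1 gives a partition of N in P^{ed}_{od} whose smallest
      even part is o-1.  Conversely, replacing the smallest even part e of a
      partition of N in P^{ed}_{od} by e+1 produces the largest odd part of a
      partition of N+1.  Both maps keep the number of parts and are mutually
      inverse, so p(m, N+1) counts the partitions of N in P^{ed}_{od} with
      m parts that have an even part.
   2. Split.  A partition in P^{ed}_{od} without even parts is exactly a
      partition into distinct odd parts (for m >= 1 the "some odd part"
      condition is automatic), so p(m, N) = p(m, N+1) + D_o(m, N). *)

Lemma card_bij (aT bT : finType) (A : {set aT}) (B : {set bT})
    (f : aT -> bT) (g : bT -> aT) :
  {in A, forall x, f x \in B} -> {in B, forall y, g y \in A} ->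
  {in A, cancel f g} -> {in B, cancel g f} -> #|A| = #|B|.
Proof.
move=> fAB gBA fK gK; apply/eqP; rewrite eqn_leq; apply/andP; split.
  rewrite -(card_in_imset (can_in_inj fK)); apply: subset_leq_card.
  by apply/subsetP=> _ /imsetP[x xA ->]; exact: fAB.
rewrite -(card_in_imset (can_in_inj gK)); apply: subset_leq_card.
by apply/subsetP=> _ /imsetP[y yB ->]; exact: gBA.
Qed.

Lemma in_PedP k (S : {set 'I_k.+1}) :
  reflect [/\ forall x : 'I_k.+1, x \in S -> 0 < x,
              \sum_(i in S) (i : nat) = k,
              forall x y : 'I_k.+1, x \in S -> y \in S -> odd x -> ~~ odd y -> x < y
            & exists2 x, x \in S & odd x]
          (in_Ped_od S).
Proof.
rewrite /in_Ped_od /distinct_partition.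
apply: (iffP idP) => [|[pos sumS ord oddS]].
  case/andP=> /andP[/andP[S0 /eqP sumS] /forall_inP ord] /exists_inP oddS.
  split=> //.
    move=> x xS; rewrite lt0n; apply: contraNneq S0 => x0.
    by have -> : ord0 = x by exact: val_inj.
  move=> x y xS yS ox ey.
  by have /forall_inP/(_ y yS) := ord x xS; rewrite ox ey.
rewrite sumS eqxx andbT; apply/andP; split; last exact/exists_inP.
apply/andP; split; first by apply/negP => /pos.
apply/forall_inP=> x xS; apply/forall_inP=> y yS.
by apply/implyP=> ox; apply/implyP; exact: ord.
Qed.
Arguments in_PedP {k S}.

Section Extremal.
Variables (k : nat) (S : {set 'I_k}).

Definition top_odd (x : 'I_k) : bool :=
  [&& x \in S, odd x & [forall y in S, odd y ==> (y <= x)]].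

Definition bottom_even (x : 'I_k) : bool :=
  [&& x \in S, ~~ odd x & [forall y in S, ~~ odd y ==> (x <= y)]].

Lemma top_oddP x :
  reflect [/\ x \in S, odd x & forall y : 'I_k, y \in S -> odd y -> y <= x]
          (top_odd x).
Proof.
apply: (iffP and3P) => [[xS ox /forall_inP le_x]|[xS ox le_x]]; split=> //.
  by move=> y yS; apply/implyP/le_x.
by apply/forall_inP=> y yS; apply/implyP/le_x.
Qed.

Lemma bottom_evenP x :
  reflect [/\ x \in S, ~~ odd x & forall y : 'I_k, y \in S -> ~~ odd y -> x <= y]
          (bottom_even x).
Proof.
apply: (iffP and3P) => [[xS ex /forall_inP ge_x]|[xS ex ge_x]]; split=> //.
  by move=> y yS; apply/implyP/ge_x.
by apply/forall_inP=> y yS; apply/implyP/ge_x.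
Qed.

Lemma top_odd_uniq x y : top_odd x -> top_odd y -> x = y.
Proof.
move=> /top_oddP[xS ox le_x] /top_oddP[yS oy le_y].
by apply/val_inj/eqP; rewrite eqn_leq le_x ?le_y.
Qed.

Lemma bottom_even_uniq x y : bottom_even x -> bottom_even y -> x = y.
Proof.
move=> /bottom_evenP[xS ex ge_x] /bottom_evenP[yS ey ge_y].
by apply/val_inj/eqP; rewrite eqn_leq ge_x ?ge_y.
Qed.

Lemma exists_top_odd : (exists2 x, x \in S & odd x) -> exists x, top_odd x.
Proof.
move=> [x0 x0S ox0].
have [|x /andP[xS ox] le_x] := @arg_maxnP _ x0 [pred x in S | odd x] val.
  by rewrite inE x0S.
by exists x; apply/top_oddP; split=> // y yS oy; apply: le_x; rewrite inE yS.
Qed.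

Lemma exists_bottom_even :
  (exists2 x, x \in S & ~~ odd x) -> exists x, bottom_even x.
Proof.
move=> [x0 x0S ex0].
have [|x /andP[xS ex] ge_x] := @arg_minnP _ x0 [pred x in S | ~~ odd x] val.
  by rewrite inE x0S.
by exists x; apply/bottom_evenP; split=> // y yS ey; apply: ge_x; rewrite inE yS.
Qed.

End Extremal.
Arguments top_oddP {k S x}.
Arguments bottom_evenP {k S x}.
Arguments top_odd_uniq {k S x y}.
Arguments bottom_even_uniq {k S x y}.

Section Relabel.
Variables (k l : nat).

Definition relabel (f : 'I_k -> nat) (S : {set 'I_k}) : {set 'I_l.+1} :=
  [set inord (f x) | x in S].

Variables (f : 'I_k -> nat) (S : {set 'I_k}).
Hypothesis f_le : {in S, forall x, f x <= l}.

Lemma mem_relabel (y : 'I_l.+1) :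
  reflect (exists2 x, x \in S & (y : nat) = f x) (y \in relabel f S).
Proof.
apply: (iffP imsetP) => [[x xS ->]|[x xS yE]]; exists x => //.
  by rewrite inordK // ltnS f_le.
by apply: val_inj; rewrite /= inordK ?ltnS ?f_le.
Qed.

Hypothesis f_inj : {in S &, injective f}.

Lemma relabel_inj : {in S &, injective (fun x => inord (f x) : 'I_l.+1)}.
Proof.
move=> x y xS yS /(congr1 val); rewrite /= !inordK ?ltnS ?f_le //.
exact: f_inj.
Qed.

Lemma card_relabel : #|relabel f S| = #|S|.
Proof. exact: card_in_imset relabel_inj. Qed.

Lemma sum_relabel : \sum_(y in relabel f S) (y : nat) = \sum_(x in S) f x.
Proof.
rewrite big_imset /=; last exact: relabel_inj.
by apply: eq_bigr => x xS; rewrite inordK ?ltnS ?f_le.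
Qed.

End Relabel.

Definition bump k (a : 'I_k) (b : nat) (x : 'I_k) : nat := if x == a then b else x.

Section Bump.
Variables (k l : nat) (S : {set 'I_k.+1}) (a : 'I_k.+1) (b : nat).
Hypotheses (aS : a \in S) (b_new : {in S, forall x : 'I_k.+1, (x : nat) != b}).
Hypothesis bump_le : {in S, forall x, bump a b x <= l}.

Lemma bump_inj : {in S &, injective (bump a b)}.
Proof.
move=> x y xS yS; rewrite /bump.
case: (eqVneq x a) => [->|_]; case: (eqVneq y a) => [->|_] //.
- by move=> /esym/eqP; rewrite (negbTE (b_new yS)).
- by move=> /eqP; rewrite (negbTE (b_new xS)).
- exact: val_inj.
Qed.

Lemma card_bumped : #|relabel l (bump a b) S| = #|S|.
Proof. exact: card_relabel bump_le bump_inj. Qed.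

Lemma sum_bumped :
  \sum_(y in relabel l (bump a b) S) (y : nat) + a = \sum_(x in S) (x : nat) + b.
Proof.
rewrite (sum_relabel bump_le bump_inj) !(bigD1 a aS) /= {1}/bump eqxx.
rewrite (eq_bigr (fun x : 'I_k.+1 => (x : nat))); first lia.
by move=> x /andP[_ xa]; rewrite /bump (negbTE xa).
Qed.

Lemma bumpedK : relabel k (bump (inord b) a) (relabel l (bump a b) S) = S.
Proof.
rewrite /relabel -imset_comp -[RHS]imset_id; apply: eq_in_imset => x xS /=.
have b_le : b <= l by move: (bump_le aS); rewrite /bump eqxx.
rewrite {2}/bump; case: (eqVneq x a) => [->|xa]; first by rewrite /bump !eqxx inord_val.
have x_le : x <= l by move: (bump_le xS); rewrite /bump (negbTE xa).
have xb : (inord x == inord b :> 'I_l.+1) = false.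
  by apply/negP => /eqP/(congr1 val); rewrite /= !inordK ?ltnS //; apply/eqP/b_new.
by rewrite /bump xb inordK ?ltnS // inord_val.
Qed.

End Bump.

Definition shift_down N (S : {set 'I_N.+2}) : {set 'I_N.+1} :=
  relabel N (fun x => if top_odd S x then x.-1 else x) S.

Definition shift_up N (T : {set 'I_N.+1}) : {set 'I_N.+2} :=
  relabel N.+1 (fun x => if bottom_even T x then x.+1 else x) T.

Lemma shift_downE N (S : {set 'I_N.+2}) o :
  top_odd S o -> shift_down S = relabel N (bump o o.-1) S.
Proof.
move=> top_o; apply: eq_in_imset => x xS; rewrite /bump.
case: (eqVneq x o) => [->|xo]; first by rewrite top_o.
by rewrite ifF //; apply: contraNF xo => /(top_odd_uniq top_o) ->.
Qed.

Lemma shift_upE N (T : {set 'I_N.+1}) e :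
  bottom_even T e -> shift_up T = relabel N.+1 (bump e e.+1) T.
Proof.
move=> bot_e; apply: eq_in_imset => x xT; rewrite /bump.
case: (eqVneq x e) => [->|xe]; first by rewrite bot_e.
by rewrite ifF //; apply: contraNF xe => /(bottom_even_uniq bot_e) ->.
Qed.

Section ShiftDown.
Variables (N : nat) (S : {set 'I_N.+2}) (o : 'I_N.+2).
Hypotheses (oddN : odd N) (pedS : in_Ped_od S) (top_o : top_odd S o).

(* The sum N+1 is even, so the odd parts cannot be o alone. *)
Lemma second_odd_part : exists2 y, y \in S & odd y && (y != o).
Proof.
have [_ sumS _ _] := in_PedP pedS; have [oS oo _] := top_oddP top_o.
apply/exists_inP; apply: contraT; rewrite negb_exists_in => /forall_inP no_other.
have others_even : ~~ odd (\sum_(x in S | x != o) (x : nat)).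
  apply: (big_ind (fun n => ~~ odd n)) => // [p q|x /andP[xS xo]].
    by rewrite oddD => /negbTE -> /negbTE ->.
  by move: (no_other x xS); rewrite xo andbT.
move: sumS; rewrite (bigD1 o oS) /= => /(congr1 odd).
by rewrite oddD oo (negbTE others_even) /= oddN.
Qed.

Lemma top_odd_gt1 : 1 < o.
Proof.
have [posS _ _ _] := in_PedP pedS; have [_ _ le_o] := top_oddP top_o.
have [y yS /andP[oy yo]] := second_odd_part.
have := posS y yS; have := le_o y yS oy.
by move: yo; rewrite -(inj_eq val_inj) /=; lia.
Qed.

(* No part equals N+1: it would be even and leave no room for the odd part o. *)
Lemma parts_le_N : {in S, forall x : 'I_N.+2, x <= N}.
Proof.
have [posS sumS _ _] := in_PedP pedS; have [oS oo _] := top_oddP top_o.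
move=> x xS; rewrite leqNgt; apply/negP => xN.
have xE : (x : nat) = N.+1 by have := ltn_ord x; lia.
have xo : x != o by apply: contraTneq oo => <-; rewrite xE /= oddN.
have oSx : (o \in S) && (o != x) by rewrite oS eq_sym.
move: sumS; rewrite (bigD1 x xS) (bigD1 o oSx) /=.
by have := posS o oS; lia.
Qed.

(* o-1 is even and below the odd part o, hence not a part. *)
Lemma pred_top_new : {in S, forall x : 'I_N.+2, (x : nat) != o.-1}.
Proof.
have [_ _ ordS _] := in_PedP pedS; have [oS oo _] := top_oddP top_o.
move=> x xS; apply/eqP => xE; have o_gt1 := top_odd_gt1.
have := ordS o x oS xS oo; rewrite xE; lia.
Qed.

Lemma bump_down_le : {in S, forall x, bump o o.-1 x <= N}.
Proof.
have [oS _ _] := top_oddP top_o.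
move=> x xS; rewrite /bump; case: eqVneq => _; last exact: parts_le_N.
by have := parts_le_N oS; lia.
Qed.

Lemma mem_shift_down (y : 'I_N.+1) :
  reflect (exists2 x, x \in S & (y : nat) = bump o o.-1 x) (y \in shift_down S).
Proof. by rewrite (shift_downE top_o); exact: (mem_relabel bump_down_le). Qed.

Lemma shift_down_ped : in_Ped_od (shift_down S).
Proof.
have [posS sumS ordS _] := in_PedP pedS; have [oS oo le_o] := top_oddP top_o.
have o_gt1 := top_odd_gt1.
apply/in_PedP; split.
- move=> y /mem_shift_down[x xS ->]; rewrite /bump.
  by case: eqVneq => _; [lia | exact: posS].
- have := sum_bumped oS pred_top_new bump_down_le.
  by rewrite -(shift_downE top_o) sumS; lia.
- move=> y1 y2 /mem_shift_down[x xS ->] /mem_shift_down[z zS ->]; rewrite /bump.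
  case: (eqVneq x o) => [_|xo ox]; first lia.
  have x_lt_o : x < o.
    by move: xo; rewrite -(inj_eq val_inj) /= => xo; have := le_o x xS ox; lia.
  case: (eqVneq z o) => [_ _|_]; [lia | exact: ordS].
- have [y yS /andP[oy yo]] := second_odd_part.
  have yE : (inord y : 'I_N.+1) = y :> nat by rewrite inordK ?ltnS ?parts_le_N.
  exists (inord y); last by rewrite yE.
  by apply/mem_shift_down; exists y; rewrite // yE /bump (negbTE yo).
Qed.

Lemma card_shift_down : #|shift_down S| = #|S|.
Proof. by rewrite (shift_downE top_o) (card_bumped pred_top_new bump_down_le). Qed.

Lemma shift_down_bottom : bottom_even (shift_down S) (inord o.-1).
Proof.
have [_ _ ordS _] := in_PedP pedS; have [oS oo _] := top_oddP top_o.
have o_gt1 := top_odd_gt1; have o_le := parts_le_N oS.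
apply/bottom_evenP; rewrite inordK ?ltnS; last lia.
split; [|lia|].
- by apply/mem_shift_down; exists o; rewrite // inordK ?ltnS /bump ?eqxx //; lia.
- move=> y /mem_shift_down[x xS ->]; rewrite /bump.
  case: (eqVneq x o) => // _ ex; have := ordS o x oS xS oo ex; lia.
Qed.

End ShiftDown.

Section ShiftUp.
Variables (N : nat) (T : {set 'I_N.+1}) (e : 'I_N.+1).
Hypotheses (pedT : in_Ped_od T) (bot_e : bottom_even T e).

(* e+1 is odd and above the even part e, hence not a part. *)
Lemma succ_bottom_new : {in T, forall x : 'I_N.+1, (x : nat) != e.+1}.
Proof.
have [_ _ ordT _] := in_PedP pedT; have [eT ee _] := bottom_evenP bot_e.
move=> x xT; apply/eqP => xE.
by have := ordT x e xT eT; rewrite xE /= ee => /(_ isT isT); lia.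
Qed.

Lemma bump_up_le : {in T, forall x, bump e e.+1 x <= N.+1}.
Proof. by move=> x _; rewrite /bump; case: eqVneq => _; [exact: ltn_ord | exact: ltnW]. Qed.

Lemma mem_shift_up (y : 'I_N.+2) :
  reflect (exists2 x, x \in T & (y : nat) = bump e e.+1 x) (y \in shift_up T).
Proof. by rewrite (shift_upE bot_e); exact: (mem_relabel bump_up_le). Qed.

Lemma shift_up_ped : in_Ped_od (shift_up T).
Proof.
have [posT sumT ordT oddT] := in_PedP pedT; have [eT ee ge_e] := bottom_evenP bot_e.
apply/in_PedP; split.
- move=> y /mem_shift_up[x xT ->]; rewrite /bump.
  by case: eqVneq => _; [lia | exact: posT].
- have := sum_bumped eT succ_bottom_new bump_up_le.
  by rewrite -(shift_upE bot_e) sumT; lia.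
- move=> y1 y2 /mem_shift_up[x xT ->] /mem_shift_up[z zT ->]; rewrite /bump.
  case: (eqVneq z e) => [_ _|ze]; first by rewrite /= ee.
  move=> + ez; have e_lt_z : e < z.
    by move: ze; rewrite -(inj_eq val_inj) /= => ze; have := ge_e z zT ez; lia.
  case: (eqVneq x e) => [_ _|_ ox]; [lia | exact: ordT].
- have [y yT oy] := oddT.
  have ye : y != e by apply: contraTneq oy => ->.
  have yE : (inord y : 'I_N.+2) = y :> nat by rewrite inordK // leqW.
  exists (inord y); last by rewrite yE.
  by apply/mem_shift_up; exists y; rewrite // yE /bump (negbTE ye).
Qed.

Lemma card_shift_up : #|shift_up T| = #|T|.
Proof. by rewrite (shift_upE bot_e) (card_bumped succ_bottom_new bump_up_le). Qed.

Lemma shift_up_top : top_odd (shift_up T) (inord e.+1).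
Proof.
have [_ _ ordT _] := in_PedP pedT; have [eT ee _] := bottom_evenP bot_e.
have e_lt : e.+1 < N.+2 := ltn_ord e.
apply/top_oddP; rewrite inordK //; split.
- by apply/mem_shift_up; exists e; rewrite // inordK // /bump eqxx.
- by rewrite /= ee.
- move=> y /mem_shift_up[x xT ->]; rewrite /bump.
  case: (eqVneq x e) => // _ ox; have := ordT x e xT eT ox ee; lia.
Qed.

End ShiftUp.
Arguments bump_up_le {N T e}.

Lemma shift_downK N (S : {set 'I_N.+2}) :
  odd N -> in_Ped_od S -> shift_up (shift_down S) = S.
Proof.
move=> oddN pedS; have [_ _ _ oddS] := in_PedP pedS.
have [o top_o] := exists_top_odd oddS; have [oS _ _] := top_oddP top_o.
have o_gt1 := top_odd_gt1 oddN pedS top_o.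
have o_le : o.-1 < N.+1 by have := parts_le_N oddN pedS top_o oS; lia.
rewrite (shift_upE (shift_down_bottom oddN pedS top_o)) inordK // prednK 1?ltnW //.
rewrite (shift_downE top_o).
exact: (bumpedK oS (pred_top_new oddN pedS top_o) (bump_down_le oddN pedS top_o)).
Qed.

Lemma shift_upK N (T : {set 'I_N.+1}) :
  in_Ped_od T -> [exists x in T, ~~ odd x] -> shift_down (shift_up T) = T.
Proof.
move=> pedT /exists_inP evenT; have [e bot_e] := exists_bottom_even evenT.
have [eT _ _] := bottom_evenP bot_e.
have e_lt : e.+1 < N.+2 := ltn_ord e.
rewrite (shift_downE (shift_up_top pedT bot_e)) inordK //= (shift_upE bot_e).
exact: (bumpedK eT (succ_bottom_new pedT bot_e) bump_up_le).
Qed.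

Definition ped_with_even N m : {set {set 'I_N.+1}} :=
  [set T | [&& in_Ped_od T, #|T| == m & [exists x in T, ~~ odd x]]].

Lemma card_ped_succ N m : odd N -> p_ed_od m N.+1 = #|ped_with_even N m|.
Proof.
move=> oddN; apply: (card_bij (f := @shift_down N) (g := @shift_up N)).
- move=> S; rewrite !inE => /andP[pedS /eqP cardS].
  have [_ _ _ oddS] := in_PedP pedS; have [o top_o] := exists_top_odd oddS.
  have [bS be _] := bottom_evenP (shift_down_bottom oddN pedS top_o).
  rewrite (shift_down_ped oddN pedS top_o) (card_shift_down oddN pedS top_o).
  by rewrite cardS eqxx /=; apply/exists_inP; exists (inord o.-1).
- move=> T; rewrite !inE => /and3P[pedT /eqP cardT /exists_inP evenT].
  have [e bot_e] := exists_bottom_even evenT.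
  by rewrite (shift_up_ped pedT bot_e) (card_shift_up pedT bot_e) cardT eqxx.
- by move=> S; rewrite inE => /andP[pedS _]; exact: shift_downK.
- by move=> T; rewrite inE => /and3P[pedT _ evenT]; exact: shift_upK.
Qed.

Lemma ped_without_even k (T : {set 'I_k.+1}) : 0 < #|T| ->
  (in_Ped_od T && ~~ [exists x in T, ~~ odd x]) =
  distinct_partition T && [forall x in T, odd x].
Proof.
move=> T_gt0; rewrite negb_exists_in.
apply/andP/andP => [[pedT /forall_inP noeven]|[dT /forall_inP allodd]].
  split; first by case/andP: pedT => /andP[].
  by apply/forall_inP => x /noeven; rewrite negbK.
split; last by apply/forall_inP => x /allodd ->.
have [x xT] := card_gt0P T_gt0.
rewrite /in_Ped_od dT /=; apply/andP; split.
  by apply/forall_inP => y yT; apply/forall_inP => z zT; rewrite (allodd z zT) implybT.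
by apply/exists_inP; exists x; rewrite // allodd.
Qed.

Lemma card_ped_split N m : 0 < m -> p_ed_od m N = #|ped_with_even N m| + D_o m N.
Proof.
move=> m_gt0; rewrite /p_ed_od /D_o.
rewrite -(cardsID [set T : {set 'I_N.+1} | [exists x in T, ~~ odd x]]).
congr (_ + _); apply: eq_card => T; rewrite !inE; first by rewrite andbA.
case: (eqVneq #|T| m) => [cardT|]; last by rewrite !andbF.
by rewrite andbT [LHS]andbC ped_without_even ?cardT ?andbT.
Qed.

Local Open Scope ring_scope.

Theorem mainTheorem6 (m n : nat) (hm : (1 <= m)%N) (hn : (1 <= n)%N) :
  (p_ed_od m (2 * n))%:Z - (p_ed_od m (2 * n - 1))%:Z
    = - (D_o m (2 * n - 1))%:Z.
Proof.
set N := (2 * n - 1)%N.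
have oddN : odd N by rewrite /N; lia.
have -> : (2 * n = N.+1)%N by rewrite /N; lia.
by rewrite (card_ped_succ _ oddN) (card_ped_split _ hm); lia.
Qed.
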